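(* For natural numbers $n,k$ with $2k\le n$ let $\overrightarrow{N}_{n,k}$ be the digraph with vertex set $\{1,\dots,n\}$ and edge set $\{(i,j):1\le i,j\le n\}\setminus\{(1,2),(3,4),\dots,(2k-1,2k)\}$. Every proper homomorphic image of $\overrightarrow{N}_{n,k}$ (i.e. every digraph $H$ for which there is a non-injective surjective homomorphism $\overrightarrow{N}_{n,k}\to H$) is isomorphic to $\overrightarrow{N}_{m,l}$ for some $m,l$ with $2l<m$. In particular, the set $\{\overrightarrow{N}_{2k,k}:k=1,2,3,\dots\}$ is an antichain under both the standard and the strong homomorphic image orderings.
   Context: A digraph is a set $D$ with a binary relation $E(D)\subseteq D\times D$ (loops allowed). A homomorphism maps edges to edges; it is strong if additionally every edge of the target between vertices of the image is the image of an edge. Standard homomorphic image ordering: $A\preceq B$ iff there is a surjective homomorphism $B\to A$; strong: iff there is a surjective strong homomorphism $B\to A$. An antichain is a set of pairwise incomparable elements. *)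

From mathcomp Require Import all_boot.
Set Implicit Arguments. Unset Strict Implicit. Unset Printing Implicit Defensive.

(* A digraph is a carrier type V with an edge relation E : V -> V -> Prop (loops allowed). *)

(* Edge relation of N_{n,k} on 'I_n = {0,...,n-1} (vertex i here is vertex i+1 of the paper):
   every pair (i,j) is an edge except (0,1),(2,3),...,(2k-2,2k-1),
   i.e. the paper's (1,2),(3,4),...,(2k-1,2k). *)
Definition Nrel (n k : nat) (i j : 'I_n) : Prop :=
  ~~ [&& ~~ odd i, (j : nat) == i.+1 & i < 2 * k].

Definition surj (V W : Type) (f : V -> W) : Prop := forall w, exists v, f v = w.

Definition is_hom (V W : Type) (EV : V -> V -> Prop) (EW : W -> W -> Prop) (f : V -> W) : Prop :=
  forall x y, EV x y -> EW (f x) (f y).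

Definition is_strong_hom (V W : Type) (EV : V -> V -> Prop) (EW : W -> W -> Prop)
  (f : V -> W) : Prop :=
  is_hom EV EW f /\
  forall x y, EW (f x) (f y) -> exists x' y', f x' = f x /\ f y' = f y /\ EV x' y'.

Definition hom_image_le (A B : Type) (EA : A -> A -> Prop) (EB : B -> B -> Prop) : Prop :=
  exists f : B -> A, is_hom EB EA f /\ surj f.

Definition strong_hom_image_le (A B : Type) (EA : A -> A -> Prop) (EB : B -> B -> Prop)
  : Prop :=
  exists f : B -> A, is_strong_hom EB EA f /\ surj f.

Definition dg_iso (A B : Type) (EA : A -> A -> Prop) (EB : B -> B -> Prop) : Prop :=
  exists g : A -> B, bijective g /\ forall a b, EA a b <-> EB (g a) (g b).

From mathcomp Require Import all_boot zify boolp.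

Set Implicit Arguments. Unset Strict Implicit. Unset Printing Implicit Defensive.

(* A homomorphism from N_{n,k} can only lose edges of the complete digraph,
   and a non-edge (f x, f y) of the image forces (x, y) to be one of the
   removed pairs (2i, 2i+1) and the fibres of f x and f y to be singletons.
   Hence a proper image is the complete digraph with loops minus a matching
   of l edges, on m vertices; a collapsed fibre lies off the matching, so
   2l < m, and listing the matched pairs first exhibits it as N_{m,l}.
   In N_{2k,k} every vertex lies on a removed edge, so every surjective
   homomorphism onto it is a bijection, which forces k = k'. *)

Lemma Nrel_nonedge n k (i j : 'I_n) :
  ~ Nrel k i j <-> [/\ ~~ odd i, j = i.+1 :> nat & i < 2 * k].
Proof.
rewrite /Nrel; split=> [/negP/negPn/and3P[? /eqP ? ?] // | [? ? ?]].
by apply/negP/negPn/and3P; split=> //; apply/eqP.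
Qed.

Lemma Nrel_vertex_on_nonedge k (w : 'I_(2 * k)) :
  exists v, ~ Nrel k w v \/ ~ Nrel k v w.
Proof.
have w_lt := ltn_ord w.
case: (boolP (odd w)) => w_odd.
- have v_lt : w.-1 < 2 * k by lia.
  by exists (Ordinal v_lt); right; apply/Nrel_nonedge => /=; split; lia.
- have v_lt : w.+1 < 2 * k by lia.
  by exists (Ordinal v_lt); left; apply/Nrel_nonedge => /=; split; lia.
Qed.

Lemma inj_surj_bijective (A B : Type) (g : A -> B) :
  injective g -> surj g -> bijective g.
Proof.
move=> g_inj g_surj; pose h b := proj1_sig (cid (g_surj b)).
have hK : cancel h g by move=> b; exact: proj2_sig (cid (g_surj b)).
by exists h => // a; apply: g_inj; rewrite hK.
Qed.

Section HomFromN.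

Variables (n k : nat) (H : Type) (EH : H -> H -> Prop) (f : 'I_n -> H).
Hypothesis f_hom : is_hom (Nrel k) EH f.

Lemma hom_nonedge x y :
  ~ EH (f x) (f y) -> [/\ ~~ odd x, y = x.+1 :> nat & x < 2 * k].
Proof. by move=> nE; apply/Nrel_nonedge => /f_hom. Qed.

Lemma hom_nonedge_fibres x y : ~ EH (f x) (f y) ->
  (forall z, f z = f x -> z = x) /\ (forall z, f z = f y -> z = y).
Proof.
move=> nE; have [_ y_eq _] := hom_nonedge nE.
split=> z fz; apply: ord_inj.
- have [_ ? _] : [/\ ~~ odd z, y = z.+1 :> nat & z < 2 * k].
    by apply: hom_nonedge; rewrite fz.
  lia.
- have [_ ? _] : [/\ ~~ odd x, z = x.+1 :> nat & x < 2 * k].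
    by apply: hom_nonedge; rewrite fz.
  lia.
Qed.

Lemma hom_onto_inj_of_nonedge_cover :
  (forall u, exists v, ~ EH u v \/ ~ EH v u) -> surj f -> injective f.
Proof.
move=> cover f_surj a b fab; have [v nE] := cover (f a); have [y fy] := f_surj v.
rewrite -fy in nE; case: nE => /hom_nonedge_fibres[fib_x fib_y].
- exact/esym/fib_x/esym.
- exact/esym/fib_y/esym.
Qed.

End HomFromN.

Section ProperImage.

Variables (n k : nat) (H : Type) (EH : H -> H -> Prop) (f : 'I_n -> H).
Variable x0 : 'I_n.
Hypotheses (k_le : 2 * k <= n) (f_hom : is_hom (Nrel k) EH f) (f_surj : surj f).

(* [F] reads [f] on natural-number indices; its values at [x >= n] are junk. *)
Let F (x : nat) : H := f (insubd x0 x).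

Lemma F_val (x : 'I_n) : F x = f x.
Proof. by rewrite /F valKd. Qed.

Lemma F_nonedge x y : x < n -> y < n -> ~ EH (F x) (F y) ->
  [/\ ~~ odd x, y = x.+1, x < 2 * k,
      forall z, z < n -> F z = F x -> z = x
    & forall z, z < n -> F z = F y -> z = y].
Proof.
move=> x_lt y_lt nE; have [fib_x fib_y] := hom_nonedge_fibres f_hom nE.
have [] := hom_nonedge f_hom nE; rewrite !val_insubd x_lt y_lt => x_even y_eq x_lt2k.
have fibre u z : u < n -> z < n -> insubd x0 z = insubd x0 u :> 'I_n -> z = u.
  by move=> u_lt z_lt /(congr1 val); rewrite !val_insubd u_lt z_lt.
by split=> // z z_lt Fz; apply: fibre => //; [apply: fib_x | apply: fib_y].
Qed.

(* [reps] lists the cut pairs (2i, 2i+1) first, then the least index of every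
   other fibre of [F]. *)
Definition cut i := `[< ~ EH (F i.*2) (F i.*2.+1) >].
Definition cuts := [seq i <- iota 0 k | cut i].
Definition ncuts := size cuts.
Definition paired x := x./2 \in cuts.
Definition least_in_fibre x := all (fun y => ~~ `[< F y = F x >]) (iota 0 x).
Definition unpaired_reps := [seq x <- iota 0 n | ~~ paired x && least_in_fibre x].
Definition paired_list := [seq (nth 0 cuts j./2).*2 + odd j | j <- iota 0 (2 * ncuts)].
Definition reps := paired_list ++ unpaired_reps.
Definition image_enum (a : 'I_(size reps)) := F (nth 0 reps a).

Lemma mem_cuts i : (i \in cuts) = (i < k) && cut i.
Proof. by rewrite mem_filter mem_iota andbC. Qed.

Lemma paired_fibre x z : paired x -> z < n -> F z = F x -> z = x.
Proof.
rewrite /paired mem_cuts => /andP[half_lt /asboolP nE] z_lt Fz.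
have [||_ _ _ fib_l fib_r] := F_nonedge _ _ nE; try lia.
case: (boolP (odd x)) => x_odd.
- have x_eq : x = (x./2).*2.+1 by lia.
  by rewrite x_eq in Fz *; apply: fib_r.
- have x_eq : x = (x./2).*2 by lia.
  by rewrite x_eq in Fz *; apply: fib_l.
Qed.

Lemma size_paired_list : size paired_list = 2 * ncuts.
Proof. by rewrite size_map size_iota. Qed.

Lemma size_reps : size reps = 2 * ncuts + size unpaired_reps.
Proof. by rewrite size_cat size_paired_list. Qed.

Lemma nth_reps_pair j (b : bool) :
  j < ncuts -> nth 0 reps (j.*2 + b) = (nth 0 cuts j).*2 + b.
Proof.
move=> j_lt; have lt : j.*2 + b < 2 * ncuts by lia.
rewrite nth_cat size_paired_list lt (nth_map 0) ?size_iota // nth_iota //.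
by rewrite add0n [j.*2 + b]addnC half_bit_double oddD odd_double oddb addbF.
Qed.

Lemma nth_reps_unpaired a : nth 0 reps (2 * ncuts + a) = nth 0 unpaired_reps a.
Proof. by rewrite nth_cat size_paired_list ltnNge leq_addr addKn. Qed.

Lemma paired_list_paired x : x \in paired_list -> paired x.
Proof.
case/mapP => j; rewrite mem_iota => /andP[_ j_lt] ->.
by rewrite /paired addnC half_bit_double mem_nth // ltn_half_double -mul2n.
Qed.

Lemma reps_lt x : x \in reps -> x < n.
Proof.
rewrite mem_cat => /orP[/paired_list_paired | ].
- by rewrite /paired mem_cuts => /andP[? _]; lia.
- by rewrite mem_filter mem_iota => /andP[_ /andP[_]].
Qed.

Lemma reps_uniq : uniq reps.
Proof.
rewrite cat_uniq; apply/and3P; split.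
- rewrite map_inj_in_uniq ?iota_uniq // => i j.
  rewrite !mem_iota /= => i_lt j_lt eq_ij.
  have odd_eq : odd i = odd j by lia.
  have /eqP : nth 0 cuts i./2 = nth 0 cuts j./2 by lia.
  rewrite nth_uniq ?filter_uniq ?iota_uniq //.
  + by move/eqP; lia.
  + by rewrite ltn_half_double -mul2n.
  + by rewrite ltn_half_double -mul2n.
- apply/hasPn => x; rewrite mem_filter => /andP[/andP[x_unpaired _] _].
  by apply: contra x_unpaired; apply: paired_list_paired.
- by rewrite filter_uniq ?iota_uniq.
Qed.

Lemma F_inj_reps : {in reps &, injective F}.
Proof.
have unpaired_rep x : x \in reps -> ~~ paired x -> least_in_fibre x.
  rewrite mem_cat => /orP[/paired_list_paired -> // | ].
  by rewrite mem_filter => /andP[/andP[]].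
move=> x y x_in y_in Fxy.
case: (boolP (paired x)) => [x_p | x_np]; first by apply/esym/paired_fibre; rewrite ?reps_lt.
case: (boolP (paired y)) => [y_p | y_np]; first by apply: paired_fibre; rewrite ?reps_lt.
have /allP x_least := unpaired_rep _ x_in x_np.
have /allP y_least := unpaired_rep _ y_in y_np.
case: (ltngtP x y) => // [lt | gt].
- have /asboolPn[] // : ~~ `[< F x = F y >] by apply: y_least; rewrite mem_iota.
- have /asboolPn[] // : ~~ `[< F y = F x >] by apply: x_least; rewrite mem_iota.
Qed.

Lemma unpaired_rep_exists x :
  x < n -> ~~ paired x -> exists2 z, z \in unpaired_reps & F z = F x.
Proof.
move=> x_lt x_np; have ex : exists z, `[< F z = F x >] by exists x; exact/asboolP.
case: (ex_minnP ex) => z /asboolP Fz z_min.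
have z_le : z <= x by apply/z_min/asboolP.
exists z => //; rewrite mem_filter mem_iota /= andbC (leq_ltn_trans z_le x_lt) /=.
apply/andP; split.
- by apply: contra x_np => z_p; rewrite (paired_fibre z_p x_lt (esym Fz)).
- apply/allP => y; rewrite mem_iota /= => y_lt; apply/asboolPn => Fy.
  by have := z_min y (introT (asboolP _) (etrans Fy Fz)); lia.
Qed.

Lemma image_enum_inj : injective image_enum.
Proof.
move=> a b /F_inj_reps eq_ab; apply/ord_inj/eqP.
by rewrite -(nth_uniq 0 _ _ reps_uniq) // eq_ab // mem_nth.
Qed.

Lemma image_enum_surj : surj image_enum.
Proof.
move=> h; have [x <-] := f_surj h; rewrite -F_val.
case: (boolP (paired x)) => [x_p | x_np].
- have j_lt : index x./2 cuts < ncuts by rewrite index_mem.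
  have a_lt : (index x./2 cuts).*2 + odd x < size reps by rewrite size_reps; lia.
  exists (Ordinal a_lt); rewrite /image_enum /= nth_reps_pair // nth_index //.
  by congr F; lia.
- have [z z_in Fz] := unpaired_rep_exists (ltn_ord x) x_np.
  have a_lt : 2 * ncuts + index z unpaired_reps < size reps
    by rewrite size_reps ltn_add2l index_mem.
  by exists (Ordinal a_lt); rewrite /image_enum /= nth_reps_unpaired nth_index.
Qed.

Lemma image_enum_nonedge (a b : 'I_(size reps)) :
  ~ EH (image_enum a) (image_enum b) <-> [/\ ~~ odd a, b = a.+1 :> nat & a < 2 * ncuts].
Proof.
have pair_cut j : j < ncuts -> ~ EH (F (nth 0 reps j.*2)) (F (nth 0 reps j.*2.+1)).
  move=> j_lt; have := nth_reps_pair false j_lt; have := nth_reps_pair true j_lt.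
  rewrite /= !addn0 !addn1 => -> ->.
  by have := mem_nth 0 j_lt; rewrite mem_cuts => /andP[_ /asboolP].
split=> [nE | [a_even b_eq a_lt]].
- have [||x_even y_eq x_lt _ _] := F_nonedge _ _ nE; try exact/reps_lt/mem_nth.
  set x := nth 0 reps a in x_even y_eq x_lt.
  have x_cut : x./2 \in cuts.
    rewrite mem_cuts; apply/andP; split; first lia.
    have x_eq : (x./2).*2 = x by lia.
    by apply/asboolP; rewrite x_eq -y_eq.
  have j_lt : index x./2 cuts < ncuts by rewrite index_mem.
  have at_pair (c : bool) (i : 'I_(size reps)) :
      nth 0 reps i = (x./2).*2 + c -> i = (index x./2 cuts).*2 + c :> nat.
    move=> /eqP; rewrite -{1}(nth_index 0 x_cut) -nth_reps_pair // nth_uniq ?reps_uniq //.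
    - by move/eqP.
    - by rewrite size_reps; lia.
  have a_eq := at_pair false a; have b_eq := at_pair true b.
  split; lia.
- have a_half : (a : nat) = (a./2).*2 by lia.
  have b_half : (b : nat) = (a./2).*2.+1 by lia.
  by rewrite /image_enum a_half b_half; apply: pair_cut; lia.
Qed.

Lemma proper_image_iso : ~ injective f ->
  exists m l, 2 * l < m /\ dg_iso (@Nrel m l) EH.
Proof.
move=> f_ninj; exists (size reps), ncuts; split.
- have [a [b [fab ab]]] : exists a b, f a = f b /\ a <> b.
    apply: contrapT => none; apply: f_ninj => a b fab.
    by apply: contrapT => ab; apply: none; exists a, b.
  have a_np : ~~ paired a.
    apply/negP => a_p; apply/ab/ord_inj/esym/paired_fibre => //.
    by rewrite !F_val.
  have [z z_in _] := unpaired_rep_exists (ltn_ord a) a_np.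
  by rewrite size_reps -addn1 leq_add2l lt0n size_eq0; apply: contraTneq z_in => ->.
- exists image_enum; split; first exact: inj_surj_bijective image_enum_inj image_enum_surj.
  move=> a b; split=> [N | E]; apply: contrapT.
  + by move=> nE; apply: (iffRL (Nrel_nonedge _ a b) _ N); apply/(image_enum_nonedge a b).
  + by move=> nN; apply: (iffRL (image_enum_nonedge a b) _ E); apply/(Nrel_nonedge _ a b).
Qed.

End ProperImage.

Lemma Nrel_hom_image_le_eq k k' :
  hom_image_le (@Nrel (2 * k') k') (@Nrel (2 * k) k) -> k = k'.
Proof.
move=> [f [f_hom f_surj]].
have f_inj := hom_onto_inj_of_nonedge_cover f_hom (@Nrel_vertex_on_nonedge k') f_surj.
by have := bij_eq_card (inj_surj_bijective f_inj f_surj); rewrite !card_ord; lia.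
Qed.

Theorem proposition4p1 :
  (forall (n k : nat), 2 * k <= n ->
     forall (H : Type) (EH : H -> H -> Prop) (f : 'I_n -> H),
       is_hom (@Nrel n k) EH f -> surj f -> ~ injective f ->
       exists m l : nat, 2 * l < m /\ dg_iso (@Nrel m l) EH)
  /\
  (forall k k' : nat, 0 < k -> 0 < k' -> k <> k' ->
     ~ hom_image_le (@Nrel (2 * k') k') (@Nrel (2 * k) k) /\
     ~ strong_hom_image_le (@Nrel (2 * k') k') (@Nrel (2 * k) k)).
Proof.
split=> [n k k_le H EH f f_hom f_surj f_ninj | k k' _ _ neq_kk'].
- have x0 : 'I_n.
    case: n f f_hom f_surj f_ninj {k_le} => [f _ _ f_ninj | n *]; last exact: ord0.
    by exfalso; apply: f_ninj => -[].
  exact: proper_image_iso x0 k_le f_hom f_surj f_ninj.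
- split=> [/Nrel_hom_image_le_eq // | [f [[f_hom _] f_surj]]].
  by apply/neq_kk'/Nrel_hom_image_le_eq; exists f.
Qed.
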